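(* Let $n,m\ge 0$ and let $k_1\ge\dots\ge k_n\ge 0$ and $l_1\ge\dots\ge l_m\ge 0$ be integers. If \[ \prod_{i=1}^n\left(5\cdot\left(\tfrac32\right)^{k_i-1}\left(2^{2k_i-1}+1\right)\right)=\prod_{j=1}^m\left(5\cdot\left(\tfrac32\right)^{l_j-1}\left(2^{2l_j-1}+1\right)\right) \] as rational numbers, then $n=m$ and $(k_1,\dots,k_n)=(l_1,\dots,l_m)$. *)

From HB Require Import structures.
From mathcomp Require Import all_boot all_order all_algebra.
Set Implicit Arguments. Unset Strict Implicit. Unset Printing Implicit Defensive.
Import Order.TTheory GRing.Theory Num.Theory.
Local Open Scope ring_scope.

(* f(k) = 5 * (3/2)^(k-1) * (2^(2k-1) + 1), exponents taken in int so that
   k = 0 gives (3/2)^(-1) and 2^(-1), as rational numbers. *)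
Definition factor (k : nat) : rat :=
  5 * (3%:Q / 2%:Q) ^ (k%:Z - 1) * ((2%:Q) ^ (2 * k%:Z - 1) + 1).

(* Write factor k = N k / 2 ^ (k - 1) with N odd: N 0 = 5 and
   N (k + 1) = 5 * 3 ^ k * (2 ^ (2k + 1) + 1).  Equal products then have equal
   odd parts and equal exponents of 2.  Compare the largest entries: if the
   largest entry x of one side exceeds every entry of the other side, some prime
   divides N x but no N y with y < x (5 for x = 0, 3 for x = 1, and a primitive
   prime divisor of 2 ^ (2x - 1) + 1 for x >= 3), which contradicts the equality
   of the odd parts; for x = 2 the exponents of 2 differ instead.  So the largest
   entries agree, and we cancel them.

   For odd a >= 7 the primitive prime divisor of 2 ^ a + 1 is found among the
   prime factors of Phi_2a(2), which divides 2 ^ a + 1.  A non-primitive prime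
   factor p of Phi_2a(2) divides a, is the largest prime factor of 2a, and divides
   Phi_2a(2) only once; so if there were no primitive one, Phi_2a(2) would equal
   such a p.  But Phi_2a(2) ^ 2 >= 2 ^ phi(a) > p ^ 2, as |2 - w| |2 + w^2| >= 2
   on the unit circle. *)

From mathcomp Require Import all_boot all_order all_algebra algC cyclotomic.
From mathcomp Require Import zify ring.
Import Order.TTheory GRing.Theory Num.Theory.
Set Implicit Arguments. Unset Strict Implicit. Unset Printing Implicit Defensive.

(** * Divisibility of x ^ n - 1 *)

Definition geom (x k : nat) : nat := \sum_(i < k) x ^ i.

Lemma geom0 x : geom x 0 = 0.
Proof. by rewrite /geom big_ord0. Qed.

Lemma geomS x k : geom x k.+1 = geom x k + x ^ k.
Proof. by rewrite /geom big_ord_recr. Qed.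

Lemma geom2 x : geom x 2 = x + 1.
Proof. by rewrite !geomS geom0 add0n expn1 addnC. Qed.

Lemma geomE x k : (x - 1) * geom x k = x ^ k - 1.
Proof.
elim: k => [|k IHk]; first by rewrite geom0 muln0.
rewrite geomS mulnDr IHk expnS.
have [->|x_gt0] := posnP x; first by case: k {IHk} => [|k]; rewrite ?expnS !mul0n.
have : 0 < x ^ k by rewrite expn_gt0 x_gt0.
move: (x ^ k) => y y_gt0; nia.
Qed.

Lemma geom_mod p x k : x = 1 %[mod p] -> geom x k = k %[mod p].
Proof.
move=> x1; elim: k => [|k IHk]; first by rewrite geom0.
by rewrite geomS -modnDm IHk -modnXm x1 modnXm exp1n modnDm addn1.
Qed.

Lemma dvdn_exp2_sub1_mod p m : p %| 2 ^ m - 1 -> 2 ^ m = 1 %[mod p].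
Proof. by move=> p_dv; apply/eqP; rewrite eqn_mod_dvd ?expn_gt0. Qed.

Lemma dvdn_exp_sub1 x m k : x ^ m - 1 %| x ^ (m * k) - 1.
Proof. by rewrite expnM -[X in _ %| X]geomE dvdn_mulr. Qed.

Lemma dvdn_exp_sub1_gcd x d m n : 0 < x ->
  d %| x ^ m - 1 -> d %| x ^ n - 1 -> d %| x ^ gcdn m n - 1.
Proof.
move=> x_gt0; have [->|m_gt0] := posnP m; first by rewrite gcd0n.
have [a b def_am _] := egcdnP n m_gt0.
move=> /dvdn_trans/(_ (dvdn_exp_sub1 x m a)) dv_am.
move=> /dvdn_trans/(_ (dvdn_exp_sub1 x n b)) dv_bn.
move: dv_am; rewrite mulnC def_am expnD (mulnC b).
set A := x ^ (n * b) in dv_bn *; set B := x ^ gcdn m n.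
have [A_gt0 B_gt0] : 0 < A /\ 0 < B by rewrite !expn_gt0 x_gt0.
have -> : A * B - 1 = B * (A - 1) + (B - 1) by nia.
by rewrite (dvdn_addr _ (dvdn_mull _ dv_bn)).
Qed.

Lemma expn1D_sq x k : exists c, (1 + x) ^ k = 1 + k * x + x ^ 2 * c.
Proof.
elim: k => [|k [c IHk]]; first by exists 0; rewrite expn0 !mul0n muln0.
by exists (c + k + x * c); rewrite expnS IHk; ring.
Qed.

Lemma geom1D_sq x k : exists c, geom (1 + x) k = k + x * 'C(k, 2) + x ^ 2 * c.
Proof.
elim: k => [|k [c IHk]]; first by exists 0; rewrite geom0 bin0n !muln0.
have [c' def_c'] := expn1D_sq x k.
by exists (c + c'); rewrite geomS IHk def_c' binS bin1; ring.
Qed.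

(* Lifting the exponent: x = 1 + t p forces geom x p = p + t p 'C(p, 2) = p
   modulo p ^ 2, as p divides 'C(p, 2) for odd p. *)
Lemma sq_ndvd_geom p x : prime p -> odd p -> x = 1 %[mod p] ->
  ~~ (p ^ 2 %| geom x p).
Proof.
move=> p_pr p_odd x1; have p_gt2 := odd_prime_gt2 p_odd p_pr.
have -> : x = 1 + x %/ p * p.
  by rewrite {1}(divn_eq x p) x1 modn_small 1?addnC // ltnW.
have [c ->] := geom1D_sq (x %/ p * p) p.
have /dvdnP[d ->] : p %| 'C(p, 2) by rewrite prime_dvd_bin.
have -> : p + x %/ p * p * (d * p) + (x %/ p * p) ^ 2 * c
        = p ^ 2 * (x %/ p * d + (x %/ p) ^ 2 * c) + p by ring.
by rewrite (dvdn_addr _ (dvdn_mulr _ (dvdnn _))) -{2}(expn1 p) dvdn_Pexp2l // ltnW.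
Qed.

Lemma prime_dvd_exp_pred_sub1 x p : prime p -> coprime x p -> p %| x ^ p.-1 - 1.
Proof.
move=> p_pr co_xp; have x_gt0 : 0 < x.
  by case: x co_xp => // /eqP; rewrite gcd0n => p1; rewrite p1 in p_pr.
have := fermat_little x p_pr => /eqP; rewrite eqn_mod_dvd; last first.
  by rewrite -{1}(expn1 x) (leq_pexp2l x_gt0 (prime_gt0 p_pr)).
rewrite -[in x ^ p](prednK (prime_gt0 p_pr)) expnS -[X in _ - X](muln1 x) -mulnBr.
by rewrite Gauss_dvdr // coprime_sym.
Qed.

(** * Values of cyclotomic polynomials at 2 *)

Definition cyclo2 (n : nat) : nat := `|(('Phi_n).[2%:Z])%R|%N.

Lemma prod_cyclo2 n : 0 < n -> \prod_(d <- divisors n) cyclo2 d = 2 ^ n - 1.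
Proof.
move=> n_gt0; rewrite /cyclo2 -(big_morph absz abszM (erefl : absz 1 = 1%N)).
rewrite -horner_prod prod_Cyclotomic // hornerD hornerN hornerXn hornerC.
suff -> : (2%Z ^+ n - 1)%R = (2 ^ n - 1)%N by [].
by rewrite -subzn ?expn_gt0 // -[in RHS]natz natrX.
Qed.

Lemma cyclo2_dvd_exp_sub1 n : 0 < n -> cyclo2 n %| 2 ^ n - 1.
Proof.
move=> n_gt0; rewrite -prod_cyclo2 // (big_rem n) ?dvdn_mulr //.
by rewrite -dvdn_divisors.
Qed.

Lemma cyclo2_dvd_geom m n : 0 < m -> m %| n -> m < n ->
  cyclo2 n %| geom (2 ^ m) (n %/ m).
Proof.
move=> m_gt0 m_dv_n m_lt_n; have n_gt0 := leq_trans m_gt0 (ltnW m_lt_n).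
have := prod_cyclo2 n_gt0; rewrite (bigID (dvdn^~ m)) /=.
have -> : \prod_(d <- divisors n | d %| m) cyclo2 d = 2 ^ m - 1.
  rewrite -big_filter -(prod_cyclo2 m_gt0); apply/perm_big/uniq_perm.
  - by rewrite filter_uniq // divisors_uniq.
  - exact: divisors_uniq.
  move=> d; rewrite mem_filter -!dvdn_divisors //.
  by apply/andP/idP => [[] // | d_dv_m]; split; last exact: dvdn_trans m_dv_n.
have -> : 2 ^ n - 1 = (2 ^ m - 1) * geom (2 ^ m) (n %/ m).
  by rewrite geomE -expnM mulnC divnK.
move=> /eqP.
rewrite eqn_pmul2l; last by rewrite subn_gt0 -{1}(expn0 2) ltn_exp2l.
have n_ndv_m : ~~ (n %| m).
  by apply: contraL m_lt_n => /(dvdn_leq m_gt0); rewrite leqNgt.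
by move=> /eqP <-; rewrite (big_rem n) -?dvdn_divisors // n_ndv_m dvdn_mulr.
Qed.

Lemma cyclo2_dvd_geom_prime r n : 0 < n -> prime r -> r %| n ->
  cyclo2 n %| geom (2 ^ (n %/ r)) r.
Proof.
move=> n_gt0 r_pr r_dv_n; have r_gt1 := prime_gt1 r_pr.
have q_dv_n : n %/ r %| n by apply/dvdnP; exists r; rewrite mulnC divnK.
have q_gt0 : 0 < n %/ r by rewrite divn_gt0 ?prime_gt0 // dvdn_leq.
have def_r : n %/ (n %/ r) = r by rewrite -{1}(divnK r_dv_n) mulKn.
by rewrite -[X in geom _ X]def_r cyclo2_dvd_geom // ltn_Pdiv.
Qed.

Lemma cyclo2_double_dvd a : 0 < a -> cyclo2 a.*2 %| 2 ^ a + 1.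
Proof.
move=> a_gt0; have def_2 : a.*2 %/ a = 2 by rewrite -muln2 mulKn.
rewrite -geom2 -[X in geom _ X]def_2 cyclo2_dvd_geom // -?muln2 ?dvdn_mulr //.
by rewrite muln2; lia.
Qed.

Lemma odd_dvd_cyclo2 d n : 0 < n -> d %| cyclo2 n -> odd d.
Proof.
move=> n_gt0 /dvdn_trans/(_ (cyclo2_dvd_exp_sub1 n_gt0)) /dvdn_odd; apply.
by rewrite oddB ?expn_gt0 // oddX orbF addbT -lt0n.
Qed.

Lemma dvd_cyclo2_quot p m n : 0 < m -> m %| n -> m < n ->
  p %| cyclo2 n -> p %| 2 ^ m - 1 -> p %| n %/ m.
Proof.
move=> m_gt0 m_dv_n m_lt_n p_dv_C /dvdn_exp2_sub1_mod/geom_mod geom_eq.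
by have := dvdn_trans p_dv_C (cyclo2_dvd_geom m_gt0 m_dv_n m_lt_n); rewrite /dvdn geom_eq.
Qed.

(* Fermat gives p | 2 ^ gcd(n, p - 1) - 1, and gcd(n, p - 1) divides n / r
   because it is coprime to r. *)
Lemma prime_dvd_cyclo2_exp_quot p r n : 0 < n -> prime p -> p %| cyclo2 n ->
  prime r -> r %| n -> p <= r -> p %| 2 ^ (n %/ r) - 1.
Proof.
move=> n_gt0 p_pr p_dv_C r_pr r_dv_n p_le_r.
have p_odd := odd_dvd_cyclo2 n_gt0 p_dv_C.
have p_dv_g : p %| 2 ^ gcdn n p.-1 - 1.
  apply: dvdn_exp_sub1_gcd => //; first exact: dvdn_trans p_dv_C (cyclo2_dvd_exp_sub1 n_gt0).
  by rewrite prime_dvd_exp_pred_sub1 // coprime_sym coprimen2.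
have g_gt0 : 0 < gcdn n p.-1 by rewrite gcdn_gt0 n_gt0.
have co_g_r : coprime (gcdn n p.-1) r.
  rewrite coprime_sym prime_coprime //; apply: contraTN p_le_r => /(dvdn_leq g_gt0).
  have p_gt1 := prime_gt1 p_pr.
  have := dvdn_leq (_ : 0 < p.-1) (dvdn_gcdr n p.-1); lia.
have /dvdnP[c ->] : gcdn n p.-1 %| n %/ r.
  by rewrite -(Gauss_dvdl _ co_g_r) divnK ?dvdn_gcdl.
by rewrite mulnC; apply: dvdn_trans p_dv_g (dvdn_exp_sub1 _ _ _).
Qed.

Lemma prime_dvd_cyclo2_geq p r n : 0 < n -> prime p -> p %| cyclo2 n ->
  prime r -> r %| n -> r <= p.
Proof.
move=> n_gt0 p_pr p_dv_C r_pr r_dv_n; rewrite leqNgt; apply/negP => p_lt_r.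
have := prime_dvd_cyclo2_exp_quot n_gt0 p_pr p_dv_C r_pr r_dv_n (ltnW p_lt_r).
move=> /dvdn_exp2_sub1_mod/geom_mod geom_eq.
have := dvdn_trans p_dv_C (cyclo2_dvd_geom_prime n_gt0 r_pr r_dv_n).
rewrite /dvdn geom_eq -/(dvdn p r) dvdn_prime2 // => /eqP p_eq_r.
by rewrite p_eq_r ltnn in p_lt_r.
Qed.

Lemma sq_ndvd_cyclo2 p n : 0 < n -> prime p -> p %| n -> p %| cyclo2 n ->
  ~~ (p ^ 2 %| cyclo2 n).
Proof.
move=> n_gt0 p_pr p_dv_n p_dv_C.
have := prime_dvd_cyclo2_exp_quot n_gt0 p_pr p_dv_C p_pr p_dv_n (leqnn p).
move=> /dvdn_exp2_sub1_mod exp_mod.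
apply: contra (sq_ndvd_geom p_pr (odd_dvd_cyclo2 n_gt0 p_dv_C) exp_mod) => /dvdn_trans.
by apply; apply: cyclo2_dvd_geom_prime.
Qed.

Lemma cyclo2_double_nonprimitive a b p : odd a -> prime p -> p %| cyclo2 a.*2 ->
  odd b -> b < a -> p %| 2 ^ b + 1 -> p %| a.
Proof.
move=> a_odd p_pr p_dv_C b_odd b_lt_a p_dv_b.
have n_gt0 : 0 < a.*2 by rewrite double_gt0 odd_gt0.
have p_dv_a2 : p %| 2 ^ a.*2 - 1 := dvdn_trans p_dv_C (cyclo2_dvd_exp_sub1 n_gt0).
have p_dv_b2 : p %| 2 ^ b.*2 - 1.
  by rewrite (dvdn_trans p_dv_b) // -muln2 expnM (subn_sqr _ 1) dvdn_mull.
have g_gt0 : 0 < gcdn a.*2 b.*2 by rewrite gcdn_gt0 n_gt0.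
have g_lt : gcdn a.*2 b.*2 < a.*2.
  apply: leq_ltn_trans (dvdn_leq _ (dvdn_gcdr _ _)) _; first by rewrite double_gt0 odd_gt0.
  by rewrite ltn_double.
have p_dv_g := dvdn_exp_sub1_gcd (isT : 0 < 2) p_dv_a2 p_dv_b2.
have := dvd_cyclo2_quot g_gt0 (dvdn_gcdl _ _) g_lt p_dv_C p_dv_g.
move=> /dvdn_trans/(_ (dvdn_div (dvdn_gcdl _ _))); rewrite -muln2 Gauss_dvdl // coprimen2.
exact: odd_dvd_cyclo2 n_gt0 p_dv_C.
Qed.

Section CyclotomicBound.
Local Open Scope ring_scope.

(* With the real t = w + w^*, for which 2 - t = |1 - w|^2 >= 0, the product of
   the squared norms is (5 - 2t)(1 + 2t^2) = 4 + (1 - t)^2 + t^2 + 4t^2(2 - t). *)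
Lemma unit_circle_bound (w : algC) : `|w| = 1 -> 2 <= `|2 - w| * `|2 + w ^+ 2|.
Proof.
move=> w_unit; have ww : w * w^* = 1 by rewrite -normCK w_unit expr1n.
rewrite -ler_sqr ?nnegrE ?mulr_ge0 // exprMn !normCK.
set u := w^* in ww *.
have -> : (2 - w)^* = 2 - u by rewrite rmorphB /= rmorph_nat.
have -> : (2 + w ^+ 2)^* = 2 + u ^+ 2 by rewrite rmorphD rmorphXn /= rmorph_nat.
set t := w + u; have t_real : t^* = t by rewrite /t rmorphD /= conjCK addrC.
have -> : (2 - w) * (2 - u) * ((2 + w ^+ 2) * (2 + u ^+ 2))
        = (4 - 2 * t + w * u) * (4 + 2 * (t ^+ 2 - 2 * (w * u)) + (w * u) ^+ 2).
  by rewrite /t; ring.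
have -> : (4 - 2 * t + w * u) * (4 + 2 * (t ^+ 2 - 2 * (w * u)) + (w * u) ^+ 2)
        = 4 + ((1 - t) * (1 - t) + t * t + 4 * (t * t) * (2 - t)).
  by rewrite ww; ring.
have sq_ge0 (x : algC) : x^* = x -> 0 <= x * x.
  by move=> x_real; rewrite -{2}x_real mul_conjC_ge0.
have t_le2 : 0 <= 2 - t.
  have -> : 2 - t = (1 - w) * (1 - w)^*.
    rewrite rmorphB /= rmorph1 -/u; transitivity (1 - t + w * u); first by rewrite ww; ring.
    by rewrite /t; ring.
  exact: mul_conjC_ge0.
have t1 : 0 <= (1 - t) * (1 - t) by apply: sq_ge0; rewrite rmorphB /= rmorph1 t_real.
have t2 : 0 <= t * t by exact: sq_ge0.
by rewrite -natrX lerDl !addr_ge0 // mulr_ge0 // mulr_ge0.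
Qed.

Lemma cyclo2_prodE n (z : algC) : n.-primitive_root z ->
  (('Phi_n).[2%:Z])%:~R = \prod_(k < n | coprime k n) (2 - z ^+ k).
Proof.
move=> prim_z; rewrite -horner_map (Cintr_Cyclotomic prim_z) horner_prod /=.
by apply: eq_bigr => k _; rewrite hornerXsubC.
Qed.

Lemma norm_prim_root n (z : algC) : (0 < n)%N -> n.-primitive_root z -> `|z| = 1.
Proof.
move=> n_gt0 prim_z; apply/eqP.
by rewrite -(pexpr_eq1 n_gt0) // -normrX prim_expr_order // normr1.
Qed.

(* For a primitive 2a-th root z, a odd, z ^+ (a + 2) is again primitive and
   (z ^+ (a + 2)) ^+ k = - (z ^+ k) ^+ 2 for odd k, so Phi_2a(2) is also the
   product of the 2 + z ^+ 2k. *)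
Lemma cyclo2_double_lower a : odd a -> (1 < a)%N ->
  (2 ^ totient a <= cyclo2 a.*2 ^ 2)%N.
Proof.
move=> a_odd a_gt1; set n := a.*2.
have n_gt0 : (0 < n)%N by rewrite double_gt0 odd_gt0.
have [z prim_z] := C_prim_root_exists n_gt0.
have prim_z' : n.-primitive_root (z ^+ (a + 2)).
  rewrite prim_root_exp_coprime // /n -muln2 coprimeMr coprimen2 oddD a_odd andbT.
  by rewrite /coprime gcdnC gcdnDl -/(coprime a 2) coprimen2.
have z_a : z ^+ a = -1.
  have : (z ^+ a) ^+ 2 == 1 by rewrite -exprM muln2 prim_expr_order.
  rewrite sqrf_eq1 -(prim_order_dvd prim_z) => /orP[| /eqP //].
  by move=> /(dvdn_leq (odd_gt0 a_odd)); rewrite /n -addnn; lia.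
have z'_k k : coprime k n -> (z ^+ (a + 2)) ^+ k = - (z ^+ k) ^+ 2.
  rewrite /n -muln2 coprimeMr coprimen2 => /andP[_ k_odd].
  rewrite -exprM mulnDl exprD (mulnC 2 k) !exprM z_a.
  by rewrite -signr_odd k_odd expr1 mulN1r.
have tot_n : totient a = #|[pred k : 'I_n | coprime k n]|.
  rewrite -(muln1 (totient a)) -[1%N]/(totient 2) -totient_coprime ?coprimen2 //.
  rewrite muln2 totient_count_coprime big_mkord -sum1_card [RHS]big_mkcond.
  by apply: eq_bigr => k _; rewrite inE coprime_sym; case: coprime.
rewrite -(ler_nat algC) !natrX /cyclo2 natr_absz intr_norm expr2.
rewrite {1}(cyclo2_prodE prim_z) (cyclo2_prodE prim_z') !normr_prod -big_split /=.
rewrite tot_n -prodr_const; apply: ler_prod => k co_k; rewrite ler0n z'_k // opprK.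
by rewrite unit_circle_bound // normrX (norm_prim_root n_gt0 prim_z) expr1n.
Qed.

End CyclotomicBound.

(** * Primitive prime divisors of 2 ^ a + 1 *)

Lemma sq_lt_exp2 n : 6 <= n -> n.+1 ^ 2 < 2 ^ n.
Proof.
elim: n => // n IHn; rewrite leq_eqVlt => /predU1P[<- // | n_ge6].
by have := IHn n_ge6; rewrite [2 ^ n.+1]expnS; move: (2 ^ n) => e; nia.
Qed.

Lemma totient_ge_double_pred a p : odd a -> prime p -> p %| a -> a != p ->
  2 * p.-1 <= totient a.
Proof.
move=> a_odd p_pr p_dv_a a_neq_p; have a_gt0 := odd_gt0 a_odd.
have [s p_coprime_s def_a] := pfactor_coprime p_pr a_gt0.
set e := logn p a in def_a.
have e_gt0 : 0 < e by rewrite logn_gt0 mem_primes p_pr a_gt0.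
have s_gt0 : 0 < s by move: a_gt0; rewrite def_a muln_gt0 => /andP[].
rewrite def_a totient_coprime 1?coprime_sym ?coprimeXl // totient_pfactor //.
have [s_gt1 | s_le1] := ltnP 1 s.
  have s_neq2 : s != 2 by apply: contraTneq a_odd => s2; rewrite def_a s2 oddM.
  have tot_s : 1 < totient s by rewrite totient_gt1; lia.
  by rewrite leq_mul // leq_pmulr // expn_gt0 prime_gt0.
have s1 : s = 1 by lia.
have e_gt1 : 1 < e.
  rewrite ltn_neqAle e_gt0 andbT; apply: contraNneq a_neq_p => e1.
  by rewrite def_a s1 -e1 mul1n expn1.
rewrite s1 (_ : totient 1 = 1) // mul1n mulnC leq_mul2l; apply/orP; right.
rewrite (leq_trans (prime_gt1 p_pr)) // -{1}(expn1 p) leq_exp2l ?prime_gt1 //.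
by rewrite -subn1 subn_gt0.
Qed.

Lemma sq_lt_exp2_totient a p : odd a -> 7 <= a -> prime p -> p %| a ->
  p ^ 2 < 2 ^ totient a.
Proof.
move=> a_odd a_ge7 p_pr p_dv_a; have p_odd := dvdn_odd p_dv_a a_odd.
have p_gt2 := odd_prime_gt2 p_odd p_pr.
have sq_lt p' : 7 <= p' -> p' ^ 2 < 2 ^ p'.-1.
  move=> p'_ge7; have := @sq_lt_exp2 p'.-1; rewrite (ltn_predK p'_ge7); apply.
  by rewrite -ltnS (ltn_predK p'_ge7).
have [a_eq_p | a_neq_p] := eqVneq a p.
  by rewrite a_eq_p totient_prime // sq_lt // -a_eq_p.
apply: leq_trans (_ : 2 ^ (2 * p.-1) <= _); last first.
  by rewrite leq_exp2l // totient_ge_double_pred.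
have [p_ge7 | p_lt7] := leqP 7 p.
  by apply: leq_trans (sq_lt p p_ge7) _; rewrite leq_exp2l // leq_pmull.
by move: p_odd p_gt2 p_lt7; case: p {p_pr p_dv_a a_neq_p sq_lt} => [|[|[|[|[|[|[|]]]]]]].
Qed.

Lemma cyclo2_double_eq_prime a p : odd a -> prime p -> p %| cyclo2 a.*2 ->
  (forall q, prime q -> q %| cyclo2 a.*2 -> q %| a) -> cyclo2 a.*2 = p.
Proof.
move=> a_odd p_pr p_dv_C all_dv_a; set n := a.*2 in p_dv_C all_dv_a *.
have n_gt0 : 0 < n by rewrite double_gt0 odd_gt0.
have dv_n q : prime q -> q %| cyclo2 n -> q %| n.
  by move=> q_pr /(all_dv_a q q_pr) /dvdn_trans; apply; rewrite /n -muln2 dvdn_mulr.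
have [c def_C] := dvdnP p_dv_C.
have C_gt0 : 0 < cyclo2 n := odd_gt0 (odd_dvd_cyclo2 n_gt0 (dvdnn _)).
have [c_gt1 | c_le1] := ltnP 1 c; last first.
  have c1 : c = 1 by move: C_gt0; rewrite def_C; case: (c) c_le1 => [|[]].
  by rewrite def_C c1 mul1n.
have q_pr := pdiv_prime c_gt1; set q := pdiv c in q_pr.
have q_dv_C : q %| cyclo2 n by rewrite def_C dvdn_mulr // pdiv_dvd.
have q_eq_p : q = p.
  apply/eqP; rewrite eqn_leq.
  by rewrite !(prime_dvd_cyclo2_geq n_gt0) ?dv_n.
have := sq_ndvd_cyclo2 n_gt0 p_pr (dv_n p p_pr p_dv_C) p_dv_C.
by rewrite def_C expnS expn1 mulnC dvdn_pmul2l ?prime_gt0 // -q_eq_p pdiv_dvd.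
Qed.

Lemma primitive_prime_dvd_2expD1 a : odd a -> 5 <= a ->
  exists p, [/\ prime p, p %| 2 ^ a + 1 & forall b, odd b -> b < a -> ~~ (p %| 2 ^ b + 1)].
Proof.
move=> a_odd a_ge5; have [a_ge7 | a_lt7] := leqP 7 a; last first.
  have -> : a = 5 by move: a_odd a_ge5 a_lt7; case: a => [|[|[|[|[|[|[|]]]]]]].
  by exists 11; split => // -[|[|[|[|[|]]]]].
have a_gt1 : 1 < a by apply: leq_trans a_ge7.
have C_dv := cyclo2_double_dvd (odd_gt0 a_odd).
have [/hasP[q] | /hasPn all_dv_a] := boolP (has (fun q => ~~ (q %| a)) (primes (cyclo2 a.*2))).
  rewrite mem_primes => /and3P[q_pr _ q_dv_C] q_ndv_a.
  exists q; split => //; first exact: dvdn_trans C_dv.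
  move=> b b_odd b_lt_a; apply: contra q_ndv_a.
  exact: cyclo2_double_nonprimitive q_pr q_dv_C b_odd b_lt_a.
have C_gt1 : 1 < cyclo2 a.*2.
  have := cyclo2_double_lower a_odd a_gt1; rewrite ltnNge; apply: contraL => C_le1.
  rewrite -ltnNge (leq_ltn_trans (_ : _ <= 1 ^ 2)) ?leq_exp2r // exp1n.
  by rewrite -{1}(expn0 2) ltn_exp2l // totient_gt0 odd_gt0.
have dv_a q : prime q -> q %| cyclo2 a.*2 -> q %| a.
  by move=> q_pr q_dv_C; apply/negbNE/all_dv_a; rewrite mem_primes q_pr q_dv_C ltnW.
have p_pr := pdiv_prime C_gt1; have p_dv_C := pdiv_dvd (cyclo2 a.*2).
have C_eq_p := cyclo2_double_eq_prime a_odd p_pr p_dv_C dv_a.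
have := cyclo2_double_lower a_odd a_gt1.
by rewrite C_eq_p leqNgt sq_lt_exp2_totient ?dv_a.
Qed.

Definition factor_num (k : nat) : nat :=
  if k is k'.+1 then 5 * 3 ^ k' * (2 ^ (2 * k' + 1) + 1) else 5.

Lemma odd_factor_num k : odd (factor_num k).
Proof. by case: k => [|k] //=; rewrite !oddM !oddX oddD oddX addn1 orbT. Qed.

Lemma odd_mul_exp2_inj a b m n : odd a -> odd b -> a * 2 ^ m = b * 2 ^ n ->
  a = b /\ m = n.
Proof.
wlog le_mn : a b m n / m <= n.
  move=> IH a_odd b_odd eq_ab; have [le_mn | /ltnW le_nm] := leqP m n; first exact: IH.
  by have [-> ->] := IH b a n m le_nm b_odd a_odd (esym eq_ab).
move=> a_odd _; rewrite -(subnK le_mn) expnD mulnA => /eqP.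
rewrite eqn_pmul2r ?expn_gt0 // => /eqP def_a.
have /eqP nm0 : n - m == 0 by move: a_odd; rewrite def_a oddM oddX orbF => /andP[].
by rewrite def_a nm0 muln1 add0n.
Qed.

Section Factors.
Local Open Scope ring_scope.

Lemma factorE k : factor k = (factor_num k)%:R / (2 ^ k.-1)%:R.
Proof.
rewrite /factor; case: k => [|k] /=.
  by rewrite (_ : 0%:Z - 1 = -1) // (_ : 2 * 0%:Z - 1 = -1).
rewrite (_ : k.+1%:Z - 1 = k%:Z); last by lia.
rewrite (_ : 2 * k.+1%:Z - 1 = (2 * k + 1)%N%:Z); last by lia.
rewrite -!exprnP !natrM !natrX natrD natrX expr_div_n.
by field; rewrite expf_neq0.
Qed.

Lemma factor_neq0 k : factor k != 0.
Proof.
rewrite factorE; apply: mulf_neq0; last by rewrite invr_eq0 pnatr_eq0 expn_eq0.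
by rewrite pnatr_eq0 -lt0n odd_gt0 ?odd_factor_num.
Qed.

Lemma prod_factorE s : \prod_(x <- s) factor x =
  (\prod_(x <- s) factor_num x)%:R / (2 ^ \sum_(x <- s) x.-1)%:R.
Proof.
elim: s => [|x s IHs]; first by rewrite !big_nil expn0 divr1.
rewrite !big_cons IHs factorE expnD !natrM.
by field; rewrite !pnatr_eq0 !expn_eq0.
Qed.

Lemma eq_prod_factor s t : \prod_(x <- s) factor x = \prod_(x <- t) factor x ->
  (\prod_(x <- s) factor_num x = \prod_(x <- t) factor_num x)%N /\
  (\sum_(x <- s) x.-1 = \sum_(x <- t) x.-1)%N.
Proof.
rewrite !prod_factorE => /eqP; rewrite eqr_div ?pnatr_eq0 ?expn_eq0 // -!natrM eqr_nat.
have odd_prod (r : seq nat) : odd (\prod_(x <- r) factor_num x).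
  by apply: (big_ind odd) => // [m n m_odd n_odd | x _]; rewrite ?oddM ?m_odd ?odd_factor_num.
by move=> /eqP /(odd_mul_exp2_inj (odd_prod s) (odd_prod t)) [-> ->].
Qed.

End Factors.

Lemma ndvd5_exp2_odd_add1 j : ~~ (5 %| 2 ^ (2 * j + 1) + 1).
Proof.
have exp4_mod5 i : 4 ^ i %% 5 = (if odd i then 4 else 1).
  by elim: i => // i IHi; rewrite expnS -modnMm IHi /=; case: (odd i).
by rewrite /dvdn expnD expnM -modnDm -modnMm exp4_mod5; case: (odd j).
Qed.

(* 5 for k = 0, 3 for k = 1, and for k >= 3 a primitive prime divisor of
   2 ^ (2k - 1) + 1; there is none for k = 2. *)
Lemma new_prime_dvd_factor_num k : k != 2 -> exists p,
  [/\ prime p, p %| factor_num k & forall j, j < k -> ~~ (p %| factor_num j)].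
Proof.
case: k => [|[|[|x]]] // _; [by exists 5 | by exists 3; split => // -[] |].
have [p [p_pr p_dv prim_p]] : exists p, [/\ prime p, p %| 2 ^ (2 * x.+2 + 1) + 1 &
    forall b, odd b -> b < 2 * x.+2 + 1 -> ~~ (p %| 2 ^ b + 1)].
  by apply: primitive_prime_dvd_2expD1; rewrite ?oddD ?oddM //; lia.
have p_ndv5 : ~~ (p %| 5).
  by rewrite dvdn_prime2 //; apply: contraL p_dv => /eqP ->; apply: ndvd5_exp2_odd_add1.
exists p; split => // [|[_|y y_lt]]; [exact: dvdn_mull | exact: p_ndv5 |].
rewrite /= !Euclid_dvdM // Euclid_dvdX // (negbTE p_ndv5) /= negb_or.
have p_ndv3 : ~~ (p %| 3) by apply: (prim_p 1) => //; lia.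
by rewrite (negbTE p_ndv3) /=; apply: prim_p; [rewrite oddD oddM | lia].
Qed.

Lemma prod_factor_max_neq x k l : all (fun y => y < x) l ->
  (\prod_(y <- x :: k) factor y != \prod_(y <- l) factor y)%R.
Proof.
move=> /allP l_lt_x; apply/eqP => /eq_prod_factor[num_eq sum_eq].
have [x2 | x_neq2] := eqVneq x 2.
  have sum_l : \sum_(y <- l) y.-1 = 0.
    by rewrite big1_seq // => y /andP[_ /l_lt_x]; rewrite x2; case: y => [|[]].
  by move: sum_eq; rewrite big_cons x2 sum_l.
have [p [p_pr p_dv_x p_ndv]] := new_prime_dvd_factor_num x_neq2.
have : p %| \prod_(y <- l) factor_num y by rewrite -num_eq big_cons dvdn_mulr.
rewrite (Euclid_dvd_prod _ _ _ p_pr) big_has => /hasP[y /l_lt_x].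
by move=> /p_ndv /negbTE ->.
Qed.

Lemma all_ltn_path_geq h s z : path geq h s -> h < z -> all (fun w => w < z) (h :: s).
Proof.
rewrite (path_sortedE (rev_trans leq_trans)) => /andP[/allP h_ge _] h_lt_z /=.
by rewrite h_lt_z; apply/allP => w /h_ge /leq_ltn_trans; apply.
Qed.

Local Open Scope ring_scope.

Theorem lemma5 (k l : seq nat) :
  sorted geq k -> sorted geq l ->
  \prod_(x <- k) factor x = \prod_(y <- l) factor y ->
  size k = size l /\ k = l.
Proof.
move=> k_sorted l_sorted eq_prod; suff -> : k = l by [].
elim: k l k_sorted l_sorted eq_prod => [|x k IHk] [|y l] //= k_sorted l_sorted eq_prod.
- by have := @prod_factor_max_neq y l [::] isT; rewrite -eq_prod eqxx.
- by have := @prod_factor_max_neq x k [::] isT; rewrite eq_prod eqxx.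
have [x_lt_y | y_lt_x | eq_xy] := ltngtP x y.
- have := prod_factor_max_neq l (all_ltn_path_geq k_sorted x_lt_y).
  by rewrite -eq_prod eqxx.
- have := prod_factor_max_neq k (all_ltn_path_geq l_sorted y_lt_x).
  by rewrite eq_prod eqxx.
move: eq_prod; rewrite -eq_xy !big_cons => /eqP.
rewrite (inj_eq (mulfI (factor_neq0 x))) => /eqP eq_prod.
by rewrite (IHk l (path_sorted k_sorted) (path_sorted l_sorted) eq_prod) eq_xy.
Qed.
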